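(* Let $n\in\mathbb{N}$ and $0<s_1,\dots,s_n<1$ pairwise distinct. Then $$\mathcal{E}_\mu(s_1^z,\dots,s_n^z)\cap\prod_{j=1}^n s_j^{-1/2}\mathbb{T}\subseteq\overline{\{(s_1^{-\frac12+iy},\dots,s_n^{-\frac12+iy}):y\in\mathbb{R}\}}.$$
   Context: $\mu$ is the measure on $\Omega=\{\mathrm{Re}\,z\ge-\tfrac12\}$ given by $d\mu=\sum_{n=-1}^\infty \frac{|\Gamma(\frac n2+iy+1)|^2}{2\pi(n+1)!}\,dy\,d\delta_{n/2}(x)$; $s^z=e^{z\ln s}$; $\mathbb{T}$ the unit circle. The joint essential range $\mathcal{E}_\mu(\varphi_1,\dots,\varphi_n)$ of $\varphi_j\in L^\infty(\mu)$ is the set of $\lambda\in\mathbb{C}^n$ such that for every $\varepsilon>0$, $\mu(\{z:\sum_j|\varphi_j(z)-\lambda_j|<\varepsilon\})>0$. *)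

From HB Require Import structures.
From mathcomp Require Import all_boot all_order all_algebra.
From mathcomp Require Import all_classical all_reals all_analysis.
From mathcomp Require Import complex.
Set Implicit Arguments. Unset Strict Implicit. Unset Printing Implicit Defensive.
Import Order.TTheory GRing.Theory Num.Theory.
Import numFieldNormedType.Exports.
Local Open Scope classical_set_scope.
Local Open Scope ring_scope.

Section Defs.
Variable R : realType.

Definition cre (z : R[i]) : R := let: Complex a _ := z in a.
Definition cim (z : R[i]) : R := let: Complex _ b := z in b.

Definition cmod (z : R[i]) : R := Num.sqrt (cre z ^+ 2 + cim z ^+ 2).

(* s^z = e^{z ln s} = s^x (cos (y ln s) + i sin (y ln s)),  z = x + i y, s > 0 *)
Definition cpow (s : R) (z : R[i]) : R[i] :=
  Complex (expR (cre z * ln s) * cos (cim z * ln s))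
          (expR (cre z * ln s) * sin (cim z * ln s)).

(* Euler's Gamma function, Gamma(w) = int_0^oo t^(w-1) e^(-t) dt  (cre w > 0),
   with t^(w-1) = t^(a-1) (cos (b ln t) + i sin (b ln t)),  w = a + i b. *)
Definition Gamma (w : R[i]) : R[i] :=
  Complex
    (Rintegral lebesgue_measure `]0%R, +oo[%classic
       (fun t => expR ((cre w - 1) * ln t) * expR (- t) * cos (cim w * ln t)))
    (Rintegral lebesgue_measure `]0%R, +oo[%classic
       (fun t => expR ((cre w - 1) * ln t) * expR (- t) * sin (cim w * ln t))).

Definition Omega : set R[i] := [set z | - (1 / 2) <= cre z].

(* Density on the line x = m/2 (m >= -1); indexed by k = m + 1 : nat,
   so x = k/2 - 1/2 and (m+1)! = k!:
     |Gamma(m/2 + i y + 1)|^2 / (2 pi (m+1)!) *)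
Definition mu_density (k : nat) (y : R) : R :=
  cmod (Gamma (Complex (k%:R / 2 - 1 / 2 + 1) y)) ^+ 2 / (2 * pi * (k`!)%:R).

Definition mu (A : set R[i]) : \bar R :=
  (\sum_(0 <= k <oo)
     \int[lebesgue_measure]_(y in [set y : R | A (Complex (k%:R / 2 - 1 / 2)%R y)])
        (mu_density k y)%:E)%E.

Definition ess_range (n : nat) (phi : 'I_n -> R[i] -> R[i]) (lam : 'I_n -> R[i]) : Prop :=
  forall eps : R, 0 < eps ->
    (0 < mu [set z | Omega z /\ (\sum_(j < n) cmod (phi j z - lam j) < eps)%R])%E.

Definition in_closure_curve (n : nat) (s : 'I_n -> R) (lam : 'I_n -> R[i]) : Prop :=
  forall eps : R, 0 < eps -> exists y : R,
    \sum_(j < n) cmod (cpow (s j) (Complex (- (1 / 2)) y) - lam j) < eps.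

End Defs.

From HB Require Import structures.
From mathcomp Require Import all_boot all_order all_algebra.
From mathcomp Require Import all_classical all_reals all_analysis.
From mathcomp Require Import complex.
Import Order.TTheory GRing.Theory Num.Theory.
Local Open Scope ring_scope.

(* mu is carried by the lines Re z = k/2 - 1/2, k : nat.  On every line with
   k >= 1 we have |s_j^z| = s_j^(Re z) <= 1 < s_j^(-1/2) = |lam_j|, so near a
   point lam of the torus the set where all |s_j^z - lam_j| are small meets
   only the line Re z = -1/2.  A positive mass there provides a point
   -1/2 + iy with (s_j^(-1/2+iy))_j arbitrarily close to lam. *)

Lemma cmodE (R : realType) (z : R[i]) : cmod z = Normc.normc z.
Proof. by case: z. Qed.

Lemma cmod_ge0 (R : realType) (z : R[i]) : 0 <= cmod z.
Proof. exact: sqrtr_ge0. Qed.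

Lemma cmod_subr_ge (R : realType) (a b : R[i]) : cmod b - cmod a <= cmod (a - b).
Proof.
rewrite !cmodE lerBlDl -[Normc.normc (a - b)]normcN opprB.
by have := le_normcD a (b - a); rewrite addrC subrK.
Qed.

Lemma cmod_cpow (R : realType) (s : R) (z : R[i]) :
  cmod (cpow s z) = expR (cre z * ln s).
Proof.
rewrite /cmod /cpow /= !exprMn -mulrDr cos2Dsin2 mulr1 sqrtr_sqr.
by rewrite ger0_norm // expR_ge0.
Qed.

Lemma cmod_cpow_le1 (R : realType) (s : R) (z : R[i]) :
  0 < s < 1 -> 0 <= cre z -> cmod (cpow s z) <= 1.
Proof.
move=> /andP[s0 s1] z0; rewrite cmod_cpow expR_le1.
by apply: mulr_ge0_le0 => //; rewrite ln_le0 // ltW.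
Qed.

Lemma cpow_sub_ge (R : realType) (s : R) (z lam : R[i]) :
  0 < s < 1 -> 0 <= cre z -> cmod lam - 1 <= cmod (cpow s z - lam).
Proof.
move=> hs z0; apply: le_trans (cmod_subr_ge _ _ _).
by rewrite lerB // cmod_cpow_le1.
Qed.

Lemma mu_gt0_line {R : realType} (A : set R[i]) :
  (0 < mu A)%E -> exists k : nat, exists y : R, A (Complex (k%:R / 2 - 1 / 2) y).
Proof.
apply: contraPP => /forallNP noA.
suff -> : mu A = 0%E by rewrite ltxx.
apply: eseries0 => k _ _.
rewrite [X in integral _ X _](_ : _ = set0) ?integral_set0 //.
by apply/seteqP; split => // y /= Ay; apply: (noA k); exists y.
Qed.

Theorem mainTheorem9 (R : realType) (n : nat) (s : 'I_n -> R)
  (hs : forall j, 0 < s j < 1) (hinj : injective s)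
  (lam : 'I_n -> R[i]) :
  ess_range (fun j z => cpow (s j) z) lam ->
  (forall j, cmod (lam j) = expR (- (1 / 2) * ln (s j))) ->
  in_closure_curve s lam.
Proof.
move=> Hess Hlam eps eps0.
case: n s hs hinj lam Hess Hlam => [|n] s hs _ lam Hess Hlam.
  by exists 0; rewrite big_ord0.
pose d := cmod (lam ord0) - 1.
have d0 : 0 < d.
  have /andP[s0 s1] := hs ord0.
  by rewrite /d subr_gt0 Hlam expR_gt1 mulNr oppr_gt0 pmulr_rlt0 // ln_lt0 // s0.
pose e := Num.min eps d.
have e0 : 0 < e by rewrite lt_min eps0 d0.
have e_eps : e <= eps by rewrite ge_min lexx.
have e_d : e <= d by rewrite ge_min lexx orbT.
have [k [y [_ small]]] := mu_gt0_line _ (Hess e e0).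
case: k small => [|k] small.
  exists y; apply: lt_le_trans e_eps.
  by rewrite mul0r sub0r in small.
move: (lt_le_trans small e_d); rewrite ltNge => /negP[].
rewrite (bigD1 ord0) //= -[d]addr0.
apply: lerD; last by apply: sumr_ge0 => j _; exact: cmod_ge0.
apply: cpow_sub_ge => //=.
by rewrite subr_ge0 ler_pM2r ?invr_gt0 ?ltr0n // ler1n.
Qed.
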